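(* Let $\boldsymbol{\mu}=(\mu_1,\mu_2)\in\Lambda$ with $\mu_1>\mu_2$ and $\mu_1+\mu_2\ge1$. Then for every $\delta$ with $0<\delta\le\min\{x^\star(\boldsymbol{\mu}),1-x^\star(\boldsymbol{\mu})\}$, $$g(x^\star(\boldsymbol{\mu})-\delta,\boldsymbol{\mu})\ge g(x^\star(\boldsymbol{\mu})+\delta,\boldsymbol{\mu}).$$
   Context: $\Lambda=\{\boldsymbol{\mu}\in(0,1)^2:\mu_1\neq\mu_2\}$ (means of a two-armed Bernoulli bandit). For $p,q\in(0,1)$ let $d(p,q)$ be the Bernoulli Kullback–Leibler divergence. For $x\in[0,1]$, $g(x,\boldsymbol{\mu})=\inf_{\lambda\in(0,1)}\big[(1-x)d(\lambda,\mu_1)+x\,d(\lambda,\mu_2)\big]=-\log\big((1-\mu_1)^{1-x}(1-\mu_2)^x+\mu_1^{1-x}\mu_2^x\big)$, and $x^\star(\boldsymbol{\mu})=\arg\max_{x\in(0,1)}g(x,\boldsymbol{\mu})$. *)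

From Stdlib Require Import Reals.
Open Scope R_scope.

(* g(x, mu) = -log((1-mu1)^(1-x) (1-mu2)^x + mu1^(1-x) mu2^x),
   the closed form given in the context for
   inf_{lambda in (0,1)} [(1-x) d(lambda,mu1) + x d(lambda,mu2)]. *)
Definition g (x mu1 mu2 : R) : R :=
  - ln (Rpower (1 - mu1) (1 - x) * Rpower (1 - mu2) x
        + Rpower mu1 (1 - x) * Rpower mu2 x).

Definition in_Lambda (mu1 mu2 : R) : Prop :=
  0 < mu1 < 1 /\ 0 < mu2 < 1 /\ mu1 <> mu2.

Definition is_xstar (xs mu1 mu2 : R) : Prop :=
  0 < xs < 1 /\ forall x, 0 < x < 1 -> g x mu1 mu2 <= g xs mu1 mu2.

From Stdlib Require Import Reals Lra.
From Coquelicot Require Import Coquelicot.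
Open Scope R_scope.

(* Shifting to t = x - x*, the argument of the logarithm in g becomes
   E t = A e^(p t) + C e^(-q t) with A, C > 0, p = ln((1-mu2)/(1-mu1)) and
   q = ln(mu1/mu2).  Since x* maximises g, t = 0 minimises E, so p A = q C.
   The hypotheses mu1 > mu2 and mu1 + mu2 >= 1 give 0 < q <= p, and then
   E t - E (-t) = 2 (A sinh(p t) - C sinh(q t)) = (2 C / p) (q sinh(p t) - p sinh(q t)),
   which is nonnegative for t >= 0 because sinh(s)/s increases on [0, +oo). *)

Lemma cosh_le (u v : R) : 0 <= v <= u -> cosh v <= cosh u.
Proof.
  intros [Hv [Hvu | <-]]; [| lra].
  destruct (MVT_cor2 cosh sinh v u Hvu (fun c _ => derivable_pt_lim_cosh c))
    as [c [Hc [Hvc _]]].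
  assert (0 < sinh c) by (rewrite <- sinh_0; apply sinh_lt; lra).
  nra.
Qed.

Lemma sinh_mul_le (p q t : R) :
  0 <= q <= p -> 0 <= t -> p * sinh (q * t) <= q * sinh (p * t).
Proof.
  intros Hqp [Ht | <-]; [| rewrite !Rmult_0_r, sinh_0; lra].
  set (k t := q * sinh (p * t) - p * sinh (q * t)).
  set (k' t := p * q * (cosh (p * t) - cosh (q * t))).
  assert (Hk : forall c, 0 <= c <= t -> derivable_pt_lim k c (k' c)).
  { intros c _; apply is_derive_Reals; unfold k, k', sinh, cosh.
    auto_derive; [easy | field]. }
  destruct (MVT_cor2 k k' 0 t Ht Hk) as [c [Hkc [Hc _]]].
  assert (Hcosh : cosh (q * c) <= cosh (p * c)) by (apply cosh_le; nra).
  assert (k 0 = 0) by (unfold k; rewrite !Rmult_0_r, sinh_0; ring).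
  assert (0 <= k' c) by (unfold k'; apply Rmult_le_pos; nra).
  unfold k in *; nra.
Qed.

Section TwoExponentials.

Variables A C p q : R.

Definition expsum (t : R) : R := A * exp (p * t) + C * exp (- (q * t)).

Lemma expsum_pos (t : R) : 0 < A -> 0 < C -> 0 < expsum t.
Proof.
  intros HA HC; unfold expsum.
  pose proof (exp_pos (p * t)); pose proof (exp_pos (- (q * t))); nra.
Qed.

Lemma derivable_pt_lim_expsum (t : R) :
  derivable_pt_lim expsum t (p * A * exp (p * t) - q * C * exp (- (q * t))).
Proof. apply is_derive_Reals; unfold expsum; auto_derive; [easy | ring]. Qed.

Lemma expsum_min_balance (a b : R) :
  a < 0 < b -> (forall t, a < t < b -> expsum 0 <= expsum t) -> p * A = q * C.
Proof.
  intros [Ha Hb] Hmin.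
  pose (pr := exist _ _ (derivable_pt_lim_expsum 0) : derivable_pt expsum 0).
  assert (Hd := deriv_minimum expsum a b 0 pr Ha Hb (fun t h1 h2 => Hmin t (conj h1 h2))).
  rewrite (derive_pt_eq_0 _ _ _ pr (derivable_pt_lim_expsum 0)) in Hd.
  rewrite !Rmult_0_r, Ropp_0, exp_0 in Hd; lra.
Qed.

Lemma expsum_opp_le (t : R) :
  0 <= C -> 0 <= q <= p -> 0 < p -> p * A = q * C -> 0 <= t ->
  expsum (- t) <= expsum t.
Proof.
  intros HC Hqp Hp Hbal Ht.
  assert (Hsinh := sinh_mul_le p q t Hqp Ht).
  assert (Hdiff : p * (expsum t - expsum (- t)) =
                  2 * C * (q * sinh (p * t) - p * sinh (q * t))).
  { unfold expsum, sinh.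
    replace (p * - t) with (- (p * t)) by ring.
    replace (- (q * - t)) with (q * t) by ring.
    replace (p * _) with (p * A * (exp (p * t) - exp (- (p * t)))
                          - p * C * (exp (q * t) - exp (- (q * t)))) by ring.
    rewrite Hbal; field. }
  nra.
Qed.

End TwoExponentials.

Lemma Rpower_mix_shift (a b x t : R) :
  Rpower a (1 - (x + t)) * Rpower b (x + t)
  = Rpower a (1 - x) * Rpower b x * exp ((ln b - ln a) * t).
Proof. unfold Rpower; rewrite <- !exp_plus; f_equal; ring. Qed.

Lemma g_shift (mu1 mu2 x t : R) :
  g (x + t) mu1 mu2 =
  - ln (expsum (Rpower (1 - mu1) (1 - x) * Rpower (1 - mu2) x)
               (Rpower mu1 (1 - x) * Rpower mu2 x)
               (ln (1 - mu2) - ln (1 - mu1)) (ln mu1 - ln mu2) t).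
Proof.
  unfold g, expsum; rewrite !Rpower_mix_shift.
  replace ((ln mu2 - ln mu1) * t) with (- ((ln mu1 - ln mu2) * t)) by ring.
  reflexivity.
Qed.

Lemma ln_ratio_le (mu1 mu2 : R) :
  0 < mu2 < mu1 -> mu1 < 1 -> 1 <= mu1 + mu2 ->
  ln mu1 - ln mu2 <= ln (1 - mu2) - ln (1 - mu1).
Proof.
  intros H2 H1 Hsum.
  assert (ln ((1 - mu1) * mu1) <= ln ((1 - mu2) * mu2)) by (apply ln_le; nra).
  rewrite !ln_mult in H by lra; lra.
Qed.

Theorem mainTheorem2 (mu1 mu2 xs delta : R) :
  in_Lambda mu1 mu2 -> mu1 > mu2 -> mu1 + mu2 >= 1 ->
  is_xstar xs mu1 mu2 ->
  0 < delta -> delta <= Rmin xs (1 - xs) ->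
  g (xs - delta) mu1 mu2 >= g (xs + delta) mu1 mu2.
Proof.
  intros [[H1a H1b] [[H2a H2b] _]] H12 Hsum [[Hx0 Hx1] Hmax] Hd _.
  set (A := Rpower (1 - mu1) (1 - xs) * Rpower (1 - mu2) xs).
  set (C := Rpower mu1 (1 - xs) * Rpower mu2 xs).
  set (p := ln (1 - mu2) - ln (1 - mu1)).
  set (q := ln mu1 - ln mu2).
  assert (HA : 0 < A) by (apply Rmult_lt_0_compat; apply exp_pos).
  assert (HC : 0 < C) by (apply Rmult_lt_0_compat; apply exp_pos).
  assert (Hmin : forall t, - xs < t < 1 - xs -> expsum A C p q 0 <= expsum A C p q t).
  { intros t Ht.
    assert (Hg := Hmax (xs + t) ltac:(lra)).
    rewrite <- (Rplus_0_r xs) in Hg at 2; rewrite !g_shift in Hg; fold A C p q in Hg.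
    apply Rnot_lt_le; intro Hlt.
    apply (ln_increasing _ _ (expsum_pos A C p q t HA HC)) in Hlt; lra. }
  assert (Hbal := expsum_min_balance A C p q (- xs) (1 - xs) ltac:(lra) Hmin).
  assert (Hq : 0 < q) by (apply Rlt_0_minus, ln_increasing; lra).
  assert (Hqp : q <= p) by (apply ln_ratio_le; lra).
  replace (xs - delta) with (xs + - delta) by ring.
  rewrite !g_shift; fold A C p q; apply Rle_ge, Ropp_le_contravar, ln_le.
  - apply expsum_pos; assumption.
  - apply expsum_opp_le; lra.
Qed.
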